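(* Let $d\ge 1$ and let $(f_0, f_1, \ldots, f_{d-1})$ be a finite sequence of integers with $f_i > 0$ for all $i$. Put $f_{-1}=1$. The following conditions are equivalent: (i) there is a quasi-forest $\Delta$ of dimension $d-1$ with $f(\Delta) = (f_0, \ldots, f_{d-1})$; (ii) there is a forest $\Delta$ of dimension $d-1$ with $f(\Delta) = (f_0, \ldots, f_{d-1})$; (iii) the integers $c_0,\ldots,c_d$ defined by $\sum_{i=0}^{d} f_{i-1}(x-1)^{i} = \sum_{i=0}^{d} c_i x^i$ satisfy $\sum_{i=k}^{d} c_i > 0$ for each $1 \le k \le d$; (iv) the integers $b_1,\ldots,b_d$ defined by $\sum_{i=1}^{d} f_{i-1}(x-1)^{i-1} = \sum_{i=1}^{d} b_i x^{i-1}$ satisfy $b_i > 0$ for all $1 \le i \le d$.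
   Context: A simplicial complex $\Delta$ on $[n]=\{1,\ldots,n\}$ is a collection of subsets of $[n]$ such that $\{i\}\in\Delta$ for every $i\in[n]$ and $G\subset F\in\Delta$ implies $G\in\Delta$. If $d=\max\{|F|:F\in\Delta\}$, then $\dim\Delta=d-1$. Facets are maximal faces. The $f$-vector is $f(\Delta)=(f_0,\ldots,f_{d-1})$, where $f_i$ is the number of faces with $i+1$ elements. For facets $F_{i_1},\ldots,F_{i_q}$, $\langle F_{i_1},\ldots,F_{i_q}\rangle$ denotes the subcomplex consisting of all faces contained in some $F_{i_j}$. A facet $F$ of $\Delta$ is a leaf if there is a facet $G\neq F$ (a branch of $F$) with $H\cap F\subset G\cap F$ for all facets $H\neq F$. A quasi-forest is a simplicial complex whose facets admit an ordering $F_1,\ldots,F_s$ (a leaf order) such that for each $1<j\le s$, $F_j$ is a leaf of $\langle F_1,\ldots,F_j\rangle$. A forest is a simplicial complex such that for every nonempty subset $\{F_{i_1},\ldots,F_{i_q}\}$ of its facets, the subcomplex $\langle F_{i_1},\ldots,F_{i_q}\rangle$ has a leaf. (Here a complex with a single facet is regarded as a quasi-forest and forest, its single facet counting as a leaf.) *)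

From HB Require Import structures.
From mathcomp Require Import all_boot all_order all_algebra.
Set Implicit Arguments. Unset Strict Implicit. Unset Printing Implicit Defensive.
Import Order.TTheory GRing.Theory Num.Theory.

Definition is_complex (n : nat) (D : {set {set 'I_n}}) : Prop :=
  (forall i : 'I_n, [set i] \in D) /\
  (forall F G : {set 'I_n}, G \subset F -> F \in D -> G \in D).

Section Complexes.
Variable T : finType.

Definition facets (D : {set {set T}}) : {set {set T}} :=
  [set F in D | [forall G in D, (F \subset G) ==> (G == F)]].

Definition gen (S : {set {set T}}) : {set {set T}} :=
  [set G : {set T} | [exists F in S, G \subset F]].

Definition is_leaf (D : {set {set T}}) (F : {set T}) : bool :=
  (F \in facets D) &&
  ((#|facets D| == 1%N) ||
   [exists G in facets D, (G != F) &&
      [forall H in facets D, (H != F) ==> (H :&: F \subset G :&: F)]]).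

Definition has_leaf (D : {set {set T}}) : bool := [exists F, is_leaf D F].

Definition quasi_forest (D : {set {set T}}) : Prop :=
  exists s : seq {set T},
    [/\ uniq s, [set F in s] = facets D &
        forall j : nat, (1 <= j < size s)%N ->
          is_leaf (gen [set F in take j.+1 s]) (nth set0 s j)].

Definition forest (D : {set {set T}}) : Prop :=
  forall S : {set {set T}}, S != set0 -> S \subset facets D -> has_leaf (gen S).

Definition fvec (D : {set {set T}}) (i : nat) : nat :=
  #|[set F in D | #|F| == i.+1]|.

(* d = max |F| ; dim D = d - 1 *)
Definition dimp1 (D : {set {set T}}) : nat := \max_(F in D) #|F|.

End Complexes.

Definition has_fvector (n : nat) (D : {set {set 'I_n}}) (f : seq int) : Prop :=
  dimp1 D = size f /\ forall i : nat, (i < size f)%N -> ((fvec D i)%:Z = f`_i)%R.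

(* f_{i-1} with f_{-1} = 1 *)
Definition fm1 (f : seq int) (i : nat) : int := if i is j.+1 then f`_j else 1%R.

Definition cpoly (f : seq int) : {poly int} :=
  (\sum_(i < (size f).+1) fm1 f i *: ('X - 1) ^+ i)%R.

(* sum_{i=1}^d f_{i-1} (x-1)^{i-1} = sum b_i x^{i-1} ; b_i = (bpoly f)`_(i-1) *)
Definition bpoly (f : seq int) : {poly int} :=
  (\sum_(i < size f) f`_i *: ('X - 1) ^+ i)%R.

(* The face polynomial Q(D) = sum_(X in D) (x - 1)^|X| of a complex with
   f-vector f is sum_i f_(i-1) (x - 1)^i = 1 + (x - 1) B(x), so the tail sums
   of its coefficients are the coefficients b_i of B.  Gluing a leaf F onto a
   complex along its branch G changes Q by x^|F| - x^|G :&: F|; following a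
   leaf order, every tail sum stays nonnegative and the k-th one becomes
   positive as soon as some facet has at least k vertices.  Conversely, if all
   b_i are positive, write B = sum_(j < d) x^j + sum_(l in L) x^l and glue to a
   (d-1)-simplex, for each l in L, a cone over its first l vertices: these
   traces are nested, so a facet with the smallest trace is always a leaf, and
   the face polynomial is x^d + sum_(l in L) (x^(l+1) - x^l) = Q.  Finally a
   forest is a quasi-forest, by removing leaves one at a time. *)

From mathcomp Require Import all_boot all_order all_algebra.
From mathcomp Require Import ring.
Set Implicit Arguments. Unset Strict Implicit. Unset Printing Implicit Defensive.
Import Order.TTheory GRing.Theory Num.Theory.

Local Open Scope ring_scope.

Section SetFamilies.
Variable T : finType.
Implicit Types (A B S : {set {set T}}) (E F G X : {set T}) (s : seq {set T}).

Definition face_poly A : {poly int} := \sum_(X in A) ('X - 1) ^+ #|X|.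

Lemma sumr_by_card (V : nmodType) A (g : nat -> V) K :
    (forall X, X \in A -> (#|X| <= K)%N) ->
  \sum_(X in A) g #|X| = \sum_(i < K.+1) g i *+ #|[set X in A | #|X| == i]|.
Proof.
move=> leK.
rewrite (partition_big (fun X => inord #|X| : 'I_K.+1) xpredT) //=.
apply: eq_bigr => i _; rewrite -sumr_const; apply: eq_big => [X|X].
  rewrite inE; case XA: (X \in A) => //=.
  have ltX : (#|X| < K.+1)%N by rewrite ltnS leK.
  by apply/eqP/eqP => [<-|eXi]; [rewrite inordK | apply: val_inj; rewrite /= eXi inordK].
by case/andP=> XA /eqP <-; rewrite inordK // ltnS leK.
Qed.

Lemma face_poly_card A K : (forall X, X \in A -> (#|X| <= K)%N) ->
  face_poly A = \sum_(i < K.+1) (#|[set X in A | #|X| == i]|)%:Z *: ('X - 1) ^+ i.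
Proof.
move=> leK; rewrite /face_poly (sumr_by_card (fun i => ('X - 1) ^+ i) leK).
by apply: eq_bigr => i _; rewrite -scaler_nat natz.
Qed.

Lemma face_poly_powerset E : face_poly (powerset E) = 'X ^+ #|E|.
Proof.
rewrite /face_poly (sumr_by_card (fun i => ('X - 1) ^+ i) (K := #|E|)); last first.
  by move=> X; rewrite powersetE; apply: subset_leq_card.
rewrite -[in RHS](subrK 1 'X) exprD1n; apply: eq_bigr => i _; congr (_ *+ _).
by rewrite -cards_draws; apply: eq_card => X; rewrite !inE.
Qed.

Lemma face_polyU A B :
  face_poly (A :|: B) = face_poly A + face_poly B - face_poly (A :&: B).
Proof.
rewrite /face_poly (big_setID (A := A :|: B) B) (big_setID (A := A) B) /=.
by rewrite setUC setUK setDUl setDv ?set0U; ring.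
Qed.

Lemma gen_rcons s F : gen [set x in rcons s F] = gen [set x in s] :|: powerset F.
Proof.
apply/setP => X; rewrite !inE; apply/existsP/orP.
  case=> G /andP[]; rewrite inE mem_rcons inE => /orP[/eqP-> | Gs] XG; first by right.
  by left; apply/existsP; exists G; rewrite inE Gs.
case=> [/existsP[G /andP[]] | XF].
  by rewrite inE => Gs XG; exists G; rewrite inE mem_rcons inE Gs orbT.
by exists F; rewrite inE mem_rcons inE eqxx.
Qed.

Lemma face_poly_gen1 F : face_poly (gen [set x in [:: F]]) = 'X ^+ #|F|.
Proof.
have gen0 : gen [set x in [::]] = set0 :> {set {set T}}.
  by apply/setP => X; rewrite !inE; apply/existsP => -[G]; rewrite inE.
by rewrite -[[:: F]]/(rcons [::] F) gen_rcons gen0 set0U face_poly_powerset.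
Qed.

Lemma gen_setI_powerset s F G : G \in s ->
    (forall H, H \in s -> H :&: F \subset G :&: F) ->
  gen [set x in s] :&: powerset F = powerset (G :&: F).
Proof.
move=> Gs branch; apply/setP => X; rewrite !inE; apply/andP/idP.
  case=> /existsP[H /andP[]]; rewrite inE => Hs XH XF.
  by apply: subset_trans (branch H Hs); rewrite subsetI XH XF.
move=> XGF; split; last exact: subset_trans XGF (subsetIr _ _).
by apply/existsP; exists G; rewrite inE Gs /=; apply: subset_trans XGF (subsetIl _ _).
Qed.

Lemma face_poly_leaf s F G : G \in s ->
    (forall H, H \in s -> H :&: F \subset G :&: F) ->
  face_poly (gen [set x in rcons s F])
    = face_poly (gen [set x in s]) + 'X ^+ #|F| - 'X ^+ #|G :&: F|.
Proof.
by move=> Gs branch; rewrite gen_rcons face_polyU (gen_setI_powerset Gs branch) !face_poly_powerset.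
Qed.

Definition antichain S : Prop := {in S &, forall F G : {set T}, F \subset G -> F = G}.

Lemma sub_antichain A B : A \subset B -> antichain B -> antichain A.
Proof. by move=> /subsetP AB antiB F G /AB FB /AB GB; apply: antiB. Qed.

Lemma facets_gen S : antichain S -> facets (gen S) = S.
Proof.
move=> antiS; apply/setP => F; rewrite !inE; apply/andP/idP.
  case=> /existsP[G /andP[GS FG]] /forallP maxF.
  have : G \in gen S by rewrite inE; apply/existsP; exists G; rewrite GS subxx.
  by move=> /(implyP (maxF G)) /implyP /(_ FG) /eqP <-.
move=> FS; split; first by apply/existsP; exists F; rewrite FS subxx.
apply/forallP => G; apply/implyP; rewrite inE => /existsP[H /andP[HS GH]].
apply/implyP => FG; have FH := subset_trans FG GH.
by rewrite eqEsubset FG andbT (antiS F H FS HS FH).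
Qed.

Lemma facets_antichain A : antichain (facets A).
Proof.
move=> F G; rewrite !inE => /andP[_ /forallP maxF] /andP[GA _] FG.
by have /implyP/(_ GA)/implyP/(_ FG)/eqP := maxF G.
Qed.

Lemma gen_facets A : (forall F G, G \subset F -> F \in A -> G \in A) ->
  gen (facets A) = A.
Proof.
move=> closedA; apply/setP => X; rewrite inE; apply/existsP/idP.
  by case=> F /andP[]; rewrite inE => /andP[FA _] XF; apply: closedA XF FA.
move=> XA; have P0 : (X \in A) && (X \subset X) by rewrite XA subxx.
have [F /andP[FA XF] maxF] :=
  @arg_maxnP _ X (fun F => (F \in A) && (X \subset F)) (fun F => #|F|) P0.
exists F; rewrite XF andbT inE FA /=.
apply/forallP => G; apply/implyP => GA; apply/implyP => FG.
by rewrite eq_sym eqEcard FG; apply: maxF; rewrite GA (subset_trans XF FG).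
Qed.

Lemma card_le_dimp1 A X : X \in A -> (#|X| <= dimp1 A)%N.
Proof. exact: (@leq_bigmax_cond _ (fun X => X \in A) (fun X => #|X|)). Qed.

Lemma dimp1_attained A : (0 < dimp1 A)%N -> exists2 X, X \in A & #|X| = dimp1 A.
Proof.
move=> dimA; have A0 : (0 < #|A|)%N.
  rewrite lt0n; apply: contraTneq dimA => /eqP.
  by rewrite cards_eq0 /dimp1 => /eqP->; rewrite big_set0.
by have [Y YA eY] := @eq_bigmax_cond _ (fun X => X \in A) (fun X => #|X|) A0; exists Y.
Qed.

Lemma dimp1_gen S : dimp1 (gen S) = \max_(F in S) #|F|.
Proof.
rewrite /dimp1; apply/eqP; rewrite eqn_leq; apply/andP; split; apply/bigmax_leqP => X.
  rewrite inE => /existsP[F /andP[FS XF]].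
  exact: leq_trans (subset_leq_card XF) (leq_bigmax_cond _ FS).
move=> XS; apply: (@leq_bigmax_cond _ (fun F => F \in gen S) (fun F => #|F|)).
by rewrite inE; apply/existsP; exists X; rewrite XS subxx.
Qed.

Definition leaf_order s : Prop :=
  forall j, (1 <= j < size s)%N ->
    is_leaf (gen [set F in take j.+1 s]) (nth set0 s j).

Lemma leaf_order_rcons s F : leaf_order (rcons s F) <->
  leaf_order s /\ ((0 < size s)%N -> is_leaf (gen [set x in rcons s F]) F).
Proof.
have take_rcons j : (j < size s)%N -> take j.+1 (rcons s F) = take j.+1 s.
  by move=> js; rewrite -cats1 takel_cat.
split=> [lo | [lo leafF] j].
  split=> [j /andP[j1 js] | s0].
    have := lo j; rewrite size_rcons j1 ltnS (ltnW js) nth_rcons js take_rcons //.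
    exact.
  have := lo (size s); rewrite size_rcons s0 ltnSn nth_rcons ltnn eqxx.
  by rewrite take_oversize ?size_rcons //; exact.
rewrite size_rcons ltnS nth_rcons => /andP[j1]; rewrite leq_eqVlt => /orP[/eqP ej | js].
  by move: j1; rewrite ej ltnn eqxx take_oversize ?size_rcons.
by rewrite js take_rcons // lo ?j1.
Qed.

Lemma leaf_branch s F : uniq (rcons s F) ->
    antichain [set x in rcons s F] -> (0 < size s)%N ->
    is_leaf (gen [set x in rcons s F]) F ->
  exists2 G, G \in s & forall H, H \in s -> H :&: F \subset G :&: F.
Proof.
move=> us antiS s0; rewrite /is_leaf facets_gen // => /andP[_ /orP[] ].
  by rewrite cardsE (card_uniqP us) size_rcons eqSS eqn0Ngt s0.
case/existsP=> G /and3P[]; rewrite inE mem_rcons inE => /orP[/eqP-> | Gs]; first by rewrite eqxx.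
move=> _ /forallP branch; exists G => // H Hs.
have /implyP := branch H; rewrite inE mem_rcons inE Hs orbT => /(_ isT) /implyP; apply.
by apply: contraTneq Hs => ->; move: us; rewrite rcons_uniq => /andP[].
Qed.

Lemma forest_quasi_forest A : forest A -> quasi_forest A.
Proof.
move=> forestA.
suff orderS S : S \subset facets A ->
    exists s, [/\ uniq s, [set F in s] = S & leaf_order s].
  by have [s [us es lo]] := orderS _ (subxx _); exists s.
have [m] := ubnP #|S|; elim: m S => // m IH S.
rewrite ltnS => Sm SA; have [-> | S0] := eqVneq S set0.
  by exists [::]; split => // j; rewrite andbF.
have antiS : antichain S := sub_antichain SA (@facets_antichain A).
have /existsP[F leafF] := forestA S S0 SA.
have FS : F \in S by move: (leafF) => /andP[]; rewrite facets_gen.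
have [|s [us es lo]] := IH (S :\ F) _ (subset_trans (subD1set S F) SA).
  by move: Sm; rewrite (cardsD1 F S) FS.
have Fs : F \notin s by rewrite -(in_set (fun x => x \in s)) es !inE eqxx.
have esF : [set x in rcons s F] = S.
  apply/setP => x; rewrite inE mem_rcons inE -(in_set (fun x => x \in s)) es !inE.
  by case: eqVneq => [-> | ].
exists (rcons s F); split=> //; first by rewrite rcons_uniq Fs.
by apply/leaf_order_rcons; rewrite esF.
Qed.

End SetFamilies.

Section TailSums.
Variable R : nzRingType.
Implicit Types (p q : {poly R}) (N k m r : nat).

Definition tail_sum N k p : R := \sum_(k <= i < N) p`_i.

Lemma tail_sumD N k p q : tail_sum N k (p + q) = tail_sum N k p + tail_sum N k q.
Proof. by rewrite /tail_sum -big_split; apply: eq_bigr => i _; rewrite coefD. Qed.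

Lemma tail_sumB N k p q : tail_sum N k (p - q) = tail_sum N k p - tail_sum N k q.
Proof. by rewrite /tail_sum -sumrB; apply: eq_bigr => i _; rewrite coefB. Qed.

Lemma tail_sumXn N k m : (m < N)%N -> tail_sum N k 'X^m = (k <= m)%:R.
Proof.
move=> mN; rewrite /tail_sum; under eq_bigr do rewrite coefXn.
have [km | mk] := leqP k m; last first.
  by rewrite big_nat_cond big1 // => i /andP[/andP[ki _] _]; rewrite gtn_eqF ?(leq_trans mk).
rewrite (@big_cat_nat _ _ _ m) //= ?(ltnW mN) // (big_ltn mN) eqxx big_nat_cond big1; last first.
  by move=> i /andP[/andP[_ im] _]; rewrite ltn_eqF.
by rewrite big_nat_cond big1 ?addr0 ?add0r // => i /andP[/andP[mi _] _]; rewrite gtn_eqF.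
Qed.

Lemma tail_sum_step N k p m r : (r <= m < N)%N ->
  tail_sum N k (p + 'X^m - 'X^r) = tail_sum N k p + (r < k <= m)%:R.
Proof.
case/andP=> rm mN; have rN := leq_ltn_trans rm mN.
rewrite tail_sumB tail_sumD !tail_sumXn // -addrA; congr (_ + _).
have [kr | rk] := leqP k r; first by rewrite (leq_trans kr rm) subrr.
by rewrite subr0.
Qed.

End TailSums.

(* Gluing a leaf F along G raises the tail sums with |G :&: F| < k <= |F| by
   one; a tail sum with k <= |G :&: F| <= |G| was already positive. *)
Lemma leaf_order_tail_sum_gt0 (T : finType) (s : seq {set T}) N :
    uniq s -> antichain [set x in s] -> leaf_order s ->
    (forall F, F \in s -> #|F| < N)%N ->
  forall F, F \in s -> forall k, (0 < k <= #|F|)%N ->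
    0 < tail_sum N k (face_poly (gen [set x in s])).
Proof.
suff inv : (0 < size s)%N -> uniq s -> antichain [set x in s] -> leaf_order s ->
    (forall F, F \in s -> #|F| < N)%N ->
    (forall k, 0 <= tail_sum N k (face_poly (gen [set x in s]))) /\
    (forall F, F \in s -> forall k, (0 < k <= #|F|)%N ->
       0 < tail_sum N k (face_poly (gen [set x in s]))).
  move=> us anti lo ltN F Fs; have s0 : (0 < size s)%N by case: (s) Fs.
  by case: (inv s0 us anti lo ltN) => _; apply.
elim/last_ind: s => [|s F IH] // _ usF anti loF ltN.
have [lo leafF] := (leaf_order_rcons s F).1 loF.
have ltFN : (#|F| < N)%N by rewrite ltN // mem_rcons mem_head.
have [s0 | s0] := posnP (size s).
  rewrite (size0nil s0) face_poly_gen1; split=> [k | G]; first by rewrite tail_sumXn.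
  by rewrite inE => /eqP-> k /andP[_ kF]; rewrite tail_sumXn // kF ltr0n.
have [G Gs branch] := leaf_branch usF anti s0 (leafF s0).
have sub_s : [set x in s] \subset [set x in rcons s F].
  by apply/subsetP => x; rewrite !inE mem_rcons inE => ->; rewrite orbT.
have [ge0 gt0] : (forall k, 0 <= tail_sum N k (face_poly (gen [set x in s]))) /\
    (forall H, H \in s -> forall k, (0 < k <= #|H|)%N ->
       0 < tail_sum N k (face_poly (gen [set x in s]))).
  apply: IH => // [|| H Hs]; first by move: usF; rewrite rcons_uniq => /andP[].
    exact: sub_antichain sub_s anti.
  by rewrite ltN // mem_rcons inE Hs orbT.
have le_GF : (#|G :&: F| <= #|F| < N)%N by rewrite subset_leq_card ?subsetIr.
rewrite (face_poly_leaf Gs branch); split=> [k | H]; first by rewrite tail_sum_step // addr_ge0.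
rewrite mem_rcons inE => /orP[/eqP-> | Hs] k /andP[k0 kH]; rewrite tail_sum_step //.
  have [kGF | GFk] := leqP k #|G :&: F|; last by rewrite ltr_pwDr ?kH ?ltr0n.
  apply: ltr_wpDr => //; apply: (gt0 _ Gs).
  by rewrite k0 (leq_trans kGF) ?subset_leq_card ?subsetIl.
by rewrite ltr_wpDr // (gt0 _ Hs) // k0.
Qed.

Lemma comp_sum_XsubC (R : comNzRingType) K (a : nat -> R) :
  (\sum_(i < K) a i *: ('X - 1) ^+ i) \Po ('X + 1) = \poly_(i < K) a i.
Proof.
rewrite poly_def; apply: (big_ind2 (fun p q => p \Po ('X + 1) = q)) => [|p1 q1 p2 q2 <- <-|i _].
- exact: comp_poly0.
- exact: comp_polyD.
by rewrite comp_polyZ rmorphXn /= comp_polyB comp_polyX comp_polyC addrK.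
Qed.

Lemma face_poly_eq_cpoly (T : finType) (D : {set {set T}}) f :
    set0 \in D -> (forall X, X \in D -> #|X| <= size f)%N ->
  face_poly D = cpoly f <-> forall i, (i < size f)%N -> (fvec D i)%:Z = f`_i.
Proof.
move=> set0D leD; rewrite (face_poly_card leD) /cpoly.
split=> [/(congr1 (comp_poly ('X + 1))) | fD].
  rewrite (comp_sum_XsubC _ (fun i => (#|[set X in D | #|X| == i]|)%:Z)).
  by rewrite comp_sum_XsubC => /polyP eqD i lti; have := eqD i.+1; rewrite !coef_poly ltnS lti.
apply: eq_bigr => -[[|i] lti] _ //=; last by rewrite fD.
suff -> : [set X in D | #|X| == 0%N] = [set set0] by rewrite cards1.
by apply/setP => X; rewrite !inE cards_eq0; case: eqVneq => [->|]; rewrite ?andbT ?andbF.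
Qed.

Lemma cpolyE f : cpoly f = 1 + ('X - 1) * bpoly f.
Proof.
rewrite /cpoly big_ord_recl /= expr0 scale1r mulr_sumr; congr (_ + _).
by apply: eq_bigr => i _; rewrite exprS scalerAr.
Qed.

Lemma size_bpoly f : (size (bpoly f) <= size f)%N.
Proof.
apply: (leq_trans (size_sum _ _ _)); apply/bigmax_leqP => i _.
apply: (leq_trans (size_scale_leq _ _)).
by rewrite -polyC1 size_exp_XsubC.
Qed.

Lemma tail_sum_cpoly f i : (i < size f)%N ->
  tail_sum (size f).+1 i.+1 (cpoly f) = (bpoly f)`_i.
Proof.
move=> lti; have le_if : (i.+1 <= (size f).+1)%N by rewrite ltnS ltnW.
rewrite /tail_sum cpolyE (telescope_sumr_eq (fun j => - (bpoly f)`_j.-1) _ le_if) /=; last first.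
  case=> [|j] /andP[ij _] //; rewrite coefD coef1 mulrBl mul1r coefB coefXM /=.
  by rewrite add0r opprK addrC.
by rewrite [(bpoly f)`_(size f)]nth_default ?size_bpoly // oppr0 add0r opprK.
Qed.

Lemma quasi_forest_tail_sum_gt0 (T : finType) (D : {set {set T}}) (f : seq int) :
    (forall F G : {set T}, G \subset F -> F \in D -> G \in D) -> quasi_forest D ->
    dimp1 D = size f -> (forall i, (i < size f)%N -> (fvec D i)%:Z = f`_i) ->
  forall k, (1 <= k <= size f)%N -> 0 < tail_sum (size f).+1 k (cpoly f).
Proof.
move=> closedD [s [us es lo]] dimD fD k /andP[k1 kd].
have leD X : X \in D -> (#|X| <= size f)%N by rewrite -dimD; apply: card_le_dimp1.
have [X XD eX] : exists2 X, X \in D & #|X| = dimp1 D.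
  by apply: dimp1_attained; rewrite dimD (leq_trans k1 kd).
have genD : D = gen [set F in s] by rewrite es gen_facets.
move: (XD); rewrite {1}genD inE => /existsP[F /andP[]]; rewrite inE => Fs XF.
have FD F' : F' \in s -> F' \in D.
  by move=> F's; rewrite genD inE; apply/existsP; exists F'; rewrite inE F's subxx.
rewrite -(face_poly_eq_cpoly (closedD X set0 (sub0set X) XD) leD).2 // genD.
apply: (leaf_order_tail_sum_gt0 us _ lo _ Fs).
- by rewrite es; apply: facets_antichain.
- by move=> F' /FD /leD.
by rewrite k1 (leq_trans kd) // -dimD -eX subset_leq_card.
Qed.

Lemma gen_is_complex n (S : {set {set 'I_n}}) :
  (forall i, exists2 F, F \in S & i \in F) -> is_complex (gen S).
Proof.
move=> cover; split=> [i | F G GF].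
  have [F FS iF] := cover i.
  by rewrite inE; apply/existsP; exists F; rewrite FS sub1set.
rewrite !inE => /existsP[H /andP[HS FH]].
by apply/existsP; exists H; rewrite HS (subset_trans GF FH).
Qed.

(* The leaf is a member with the smallest trace on B; any other member is a branch. *)
Lemma forest_gen_nested_traces (T : finType) (S : {set {set T}}) (B : {set T}) :
    antichain S ->
    {in S &, forall F H : {set T}, F != H -> H :&: F \subset B} ->
    {in S &, forall F G : {set T}, #|F :&: B| <= #|G :&: B| -> F :&: B \subset G}%N ->
  forest (gen S).
Proof.
move=> antiS meetB nested S' S'0; rewrite facets_gen // => /subsetP S'S.
have antiS' : antichain S' by apply: sub_antichain antiS; apply/subsetP.
apply/existsP; rewrite /is_leaf facets_gen //.
have /set0Pn[F0 F0S'] := S'0.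
have [F FS' minF] := @arg_minnP _ F0 (fun F => F \in S') (fun F => #|F :&: B|) F0S'.
exists F; rewrite FS' /=; case: eqP => // /eqP S'1.
have [G] : exists G, G \in S' :\ F.
  by apply/card_gt0P; move: S'1; rewrite (cardsD1 F S') FS' add1n; case: #|_|.
rewrite !inE => /andP[GF GS']; apply/existsP; exists G; rewrite GS' GF /=.
apply/forallP => H; apply/implyP => HS'; apply/implyP => HF.
have FB_G := nested F G (S'S F FS') (S'S G GS') (minF G GS').
rewrite subsetI subsetIr andbT (subset_trans _ FB_G) //.
by rewrite subsetI subsetIr meetB // ?S'S // eq_sym.
Qed.

Lemma card_set_ltn n l : (l <= n)%N -> #|[set x : 'I_n | (x < l)%N]| = l.
Proof.
elim: l => [|l IH] ln; first by apply/eqP; rewrite cards_eq0; apply/eqP/setP => x; rewrite !inE.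
have -> : [set x : 'I_n | (x < l.+1)%N] = Ordinal ln |: [set x : 'I_n | (x < l)%N].
  by apply/setP => x; rewrite !inE ltnS leq_eqVlt -val_eqE.
by rewrite cardsU1 IH ?(ltnW ln) // inE ltnn.
Qed.

(* A (d-1)-simplex on the vertices below d, with one extra facet for each
   l in L: a new vertex glued to the first l vertices of the simplex. *)
Section GluedSimplices.
Variables (d : nat) (L : seq nat).
Hypothesis ltLd : all (fun l => l < d)%N L.
Local Notation n := (d + size L)%N.

Definition level t := if t is u.+1 then nth 0%N L u else d.

Definition glued_facet t : {set 'I_n} :=
  [set x : 'I_n | if (x < d)%N then (x < level t)%N else (0 < t)%N && (x == (d + t.-1)%N :> nat)].

Definition glued_seq j := [seq glued_facet t | t <- iota 0 j.+1].

Lemma level_le t : (t <= size L)%N -> (level t <= d)%N.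
Proof. by case: t => [|u] // ltu; apply/ltnW/(all_nthP 0%N ltLd). Qed.

Lemma glued_facet0 : glued_facet 0 = [set x : 'I_n | (x < d)%N].
Proof. by apply/setP => x; rewrite !inE; case: ltnP. Qed.

Lemma glued_facet_trace t : (t <= size L)%N ->
  glued_facet t :&: glued_facet 0 = [set x : 'I_n | (x < level t)%N].
Proof.
move=> tL; apply/setP => x; rewrite glued_facet0 !inE.
case: ltnP => dx; rewrite ?andbT ?andbF //.
by apply/esym/negbTE; rewrite -leqNgt (leq_trans (level_le tL)).
Qed.

Lemma glued_facet_meet u t : u != t -> glued_facet u :&: glued_facet t \subset glued_facet 0.
Proof.
move=> ut; apply/subsetP => x; rewrite glued_facet0 !inE; case: ltnP => // _.
case/andP=> /andP[u0 /eqP xu] /andP[t0 /eqP xt]; rewrite xu in xt; move/addnI: xt ut => {xu}.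
by case: u u0 => // u _; case: t t0 => // t _ /= ->; rewrite eqxx.
Qed.

Lemma card_glued_facet t : (t <= size L)%N -> #|glued_facet t| = (level t + (0 < t))%N.
Proof.
move=> tL; rewrite -(cardsID (glued_facet 0)) glued_facet_trace // card_set_ltn; last first.
  exact: leq_trans (level_le tL) (leq_addr _ _).
congr (_ + _)%N; case: t tL => [|u] uL; first by rewrite setDv cards0.
have ltn : (d + u < n)%N by rewrite ltn_add2l.
suff -> : glued_facet u.+1 :\: glued_facet 0 = [set Ordinal ltn] by rewrite cards1.
apply/setP => x; rewrite glued_facet0 !inE -val_eqE /=.
case: ltnP => dx //=; apply/esym/negbTE.
by rewrite neq_ltn (leq_trans dx (leq_addr u d)).
Qed.

Lemma card_glued_trace t : (t <= size L)%N ->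
  #|glued_facet t :&: glued_facet 0| = level t.
Proof.
move=> tL; rewrite glued_facet_trace // card_set_ltn //.
exact: leq_trans (level_le tL) (leq_addr _ _).
Qed.

Lemma mem_glued_seq j X :
  reflect (exists2 t, t <= j & X = glued_facet t)%N (X \in glued_seq j).
Proof.
apply: (iffP mapP) => [[t] | [t tj ->]]; last by exists t; rewrite // mem_iota ltnS tj.
by rewrite mem_iota ltnS => /andP[_ tj] ->; exists t.
Qed.

Lemma glued_antichain : antichain [set x in glued_seq (size L)].
Proof.
move=> F G; rewrite !inE => /mem_glued_seq[u uL ->] /mem_glued_seq[t tL ->] sub_ut.
congr glued_facet; apply/eqP; apply/negP => /negP ut.
have sub0 : glued_facet u \subset glued_facet 0.
  by rewrite -(setIidPl sub_ut) glued_facet_meet.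
case: u uL ut sub_ut sub0 => [|u] uL ut sub_ut sub0.
  have : (#|glued_facet 0| <= #|glued_facet t :&: glued_facet 0|)%N.
    by rewrite subset_leq_card // subsetI sub_ut subxx.
  rewrite card_glued_facet // card_glued_trace // addn0 leqNgt.
  by case: t tL ut {sub_ut} => // t tL _; rewrite (all_nthP 0%N ltLd).
by have := card_glued_facet uL; rewrite -(setIidPl sub0) card_glued_trace // addn1 => /n_Sn.
Qed.

Lemma face_poly_glued j : (j <= size L)%N ->
  face_poly (gen [set x in glued_seq j]) = 'X^d + \sum_(l <- take j L) ('X^(l.+1) - 'X^l).
Proof.
elim: j => [|j IH] jL.
  by rewrite take0 big_nil addr0 face_poly_gen1 card_glued_facet //= addn0.
have -> : glued_seq j.+1 = rcons (glued_seq j) (glued_facet j.+1).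
  by rewrite /glued_seq -addn1 iotaD map_cat cats1.
rewrite (@face_poly_leaf _ _ _ (glued_facet 0)); first last.
- move=> H /mem_glued_seq[u uj ->]; rewrite subsetI subsetIr andbT glued_facet_meet //.
  by rewrite neq_ltn ltnS uj.
- by apply/mem_glued_seq; exists 0%N.
rewrite IH ?(ltnW jL) // card_glued_facet // setIC card_glued_trace //.
by rewrite (take_nth 0%N jL) big_rcons /= addn1 !addrA.
Qed.

Lemma glued_facet_in t : (t <= size L)%N ->
  glued_facet t \in [set x in glued_seq (size L)].
Proof. by move=> tL; rewrite inE; apply/mem_glued_seq; exists t. Qed.

Lemma glued_is_complex : is_complex (gen [set x in glued_seq (size L)]).
Proof.
apply: gen_is_complex => i; have [di | di] := ltnP i d.
  by exists (glued_facet 0); rewrite ?glued_facet_in // inE di.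
have ltid : (i - d < size L)%N by rewrite ltn_subLR.
by exists (glued_facet (i - d).+1); rewrite ?glued_facet_in // inE ltnNge di /= subnKC.
Qed.

Lemma glued_forest : forest (gen [set x in glued_seq (size L)]).
Proof.
apply: forest_gen_nested_traces (glued_facet 0) glued_antichain _ _.
  move=> F H; rewrite !inE => /mem_glued_seq[u _ ->] /mem_glued_seq[t _ ->] ut.
  by rewrite glued_facet_meet //; apply: contraNneq ut => ->.
move=> F G; rewrite !inE => /mem_glued_seq[u uL ->] /mem_glued_seq[t tL ->].
rewrite !card_glued_trace // glued_facet_trace // => le_ut.
apply/subsetP => x; rewrite !inE => xu; have xt := leq_trans xu le_ut.
by rewrite (leq_trans xt (level_le tL)) xt.
Qed.

Lemma dimp1_glued : dimp1 (gen [set x in glued_seq (size L)]) = d.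
Proof.
rewrite dimp1_gen; apply/eqP; rewrite eqn_leq; apply/andP; split.
  apply/bigmax_leqP => F; rewrite inE => /mem_glued_seq[[|t] tL ->].
    by rewrite card_glued_facet //= addn0.
  by rewrite card_glued_facet // addn1; apply: (all_nthP 0%N ltLd).
have := @leq_bigmax_cond _ (fun F => F \in [set x in glued_seq (size L)]) (fun F => #|F|) _
  (glued_facet_in (leq0n _)).
by rewrite card_glued_facet //= addn0.
Qed.

End GluedSimplices.

Lemma poly_eq_sum_Xn_seq (p : {poly int}) d :
    (size p <= d)%N -> (forall j, (j < d)%N -> 0 < p`_j) ->
  exists2 L : seq nat, all (fun l => l < d)%N L &
    p = \sum_(j < d) 'X^j + \sum_(l <- L) 'X^l.
Proof.
move=> sp pos; exists (flatten [seq nseq `|p`_j|.-1 (val j) | j : 'I_d]).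
  by apply/allP => l /flatten_mapP[j _ /nseqP[-> _]]; apply: ltn_ord.
rewrite -{1}(take_poly_id sp) /take_poly poly_def big_flatten big_image -big_split.
apply: eq_big => // j _; rewrite big_nseq iter_addr_0 /= -mulrS -scaler_nat.
have pj := pos j (ltn_ord j).
by congr (_ *: _); rewrite prednK ?absz_gt0 ?(gt_eqF pj) // natz gtz0_abs.
Qed.

Lemma bpoly_gt0_forest (f : seq int) :
    (forall i, (i < size f)%N -> 0 < (bpoly f)`_i) ->
  exists n (D : {set {set 'I_n}}), [/\ is_complex D, forest D & has_fvector D f].
Proof.
move=> bpos; have [L ltL eqb] := poly_eq_sum_Xn_seq (size_bpoly f) bpos.
exists (size f + size L)%N, (gen [set x in glued_seq (size f) L (size L)]).
have dimD := dimp1_glued ltL.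
split; [exact: glued_is_complex | exact: glued_forest | split => //].
have leD X : X \in gen [set x in glued_seq (size f) L (size L)] -> (#|X| <= size f)%N.
  by move=> /card_le_dimp1; rewrite dimD.
apply/(face_poly_eq_cpoly _ leD).
  by rewrite inE; apply/existsP; exists (glued_facet (size f) L 0); rewrite glued_facet_in ?sub0set.
rewrite face_poly_glued // take_size cpolyE eqb mulrDr -subrX1 mulr_sumr.
under [in RHS]eq_bigr do rewrite mulrBl mul1r -exprS.
by ring.
Qed.

Theorem theorem1p1 (f : seq int) :
  (0 < size f)%N -> (forall i : nat, (i < size f)%N -> (0 < f`_i)%R) ->
  [<->
    (exists (n : nat) (D : {set {set 'I_n}}),
        [/\ is_complex D, quasi_forest D & has_fvector D f]);
    (exists (n : nat) (D : {set {set 'I_n}}),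
        [/\ is_complex D, forest D & has_fvector D f]);
    (forall k : nat, (1 <= k <= size f)%N ->
        (0 < \sum_(k <= i < (size f).+1) (cpoly f)`_i)%R);
    (forall i : nat, (i < size f)%N -> (0 < (bpoly f)`_i)%R)].
Proof.
move=> _ _.
have qf_tails : (exists n (D : {set {set 'I_n}}),
    [/\ is_complex D, quasi_forest D & has_fvector D f]) ->
  forall k, (1 <= k <= size f)%N -> 0 < tail_sum (size f).+1 k (cpoly f).
  by case=> n [D [[_ closedD] qfD [dimD fD]]]; apply: quasi_forest_tail_sum_gt0 qfD dimD fD.
have tails_bpos : (forall k, (1 <= k <= size f)%N -> 0 < tail_sum (size f).+1 k (cpoly f)) ->
  forall i, (i < size f)%N -> 0 < (bpoly f)`_i.
  by move=> tails i lti; rewrite -tail_sum_cpoly // tails.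
have forest_qf : (exists n (D : {set {set 'I_n}}),
    [/\ is_complex D, forest D & has_fvector D f]) ->
  exists n (D : {set {set 'I_n}}), [/\ is_complex D, quasi_forest D & has_fvector D f].
  by case=> n [D [cD fD hD]]; exists n, D; split=> //; apply: forest_quasi_forest.
tfae=> [qf | fo | tails | bpos].
- exact/bpoly_gt0_forest/tails_bpos/qf_tails.
- exact/qf_tails/forest_qf.
- exact: tails_bpos.
- exact/forest_qf/bpoly_gt0_forest.
Qed.
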